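(* Let $n\ge0$ be an integer with $\chi_n<c^2$, and let $x_1<x_2<\dots$ be the roots of $\psi_n$ in $(1,\infty)$. Then $$x_2-x_1\le x_3-x_2\le\dots\le x_{k+1}-x_k\le\dots\le\frac{\pi}{c}.$$
   Context: For a real number $c>0$, let $\psi_0,\psi_1,\dots$ be the prolate spheroidal wave functions of band limit $c$: the real $L^2[-1,1]$-normalized eigenfunctions of $F_c[\varphi](x)=\int_{-1}^1\varphi(t)e^{icxt}\,dt$ with eigenvalues $\lambda_n$ ordered by $|\lambda_n|\ge|\lambda_{n+1}|$, extended to entire functions by $\lambda_n\psi_n(x)=\int_{-1}^1\psi_n(t)e^{icxt}\,dt$. $\chi_0<\chi_1<\dots$ are the positive numbers such that $\psi_n$ satisfies $(1-x^2)\psi''(x)-2x\psi'(x)+(\chi_n-c^2x^2)\psi(x)=0$ for all $x$. (Each $\psi_n$ has infinitely many roots in $(1,\infty)$.) *)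

From Stdlib Require Import Reals.
From Coquelicot Require Import Coquelicot.
Open Scope R_scope.

(* lam * phi(x) = \int_{-1}^1 phi(t) e^{i c x t} dt, for real-valued phi,
   written out in real and imaginary parts (lam : C). *)
Definition Fc_eig (c : R) (lam : C) (phi : R -> R) (x : R) : Prop :=
  Re lam * phi x = RInt (fun t => phi t * cos (c * x * t)) (-1) 1 /\
  Im lam * phi x = RInt (fun t => phi t * sin (c * x * t)) (-1) 1.

(* psi n : the n-th prolate spheroidal wave function of band limit c,
   extended to the whole real line by lam n * psi n x = F_c[psi n](x);
   lam n its eigenvalue; chi n the corresponding ODE eigenvalue. *)
Definition is_PSWF_family (c : R) (psi : nat -> R -> R) (lam : nat -> C)
    (chi : nat -> R) : Prop :=
  (forall n x, continuous (psi n) x) /\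
  (forall n x, Fc_eig c (lam n) (psi n) x) /\
  (forall n, RInt (fun t => psi n t ^ 2) (-1) 1 = 1) /\
  (forall n m, n <> m -> RInt (fun t => psi n t * psi m t) (-1) 1 = 0) /\
  (forall n, Cmod (lam (S n)) <= Cmod (lam n)) /\
  (forall (mu : C) (phi : R -> R),
      (forall x, -1 <= x <= 1 -> continuous phi x) ->
      (exists x, -1 <= x <= 1 /\ phi x <> 0) ->
      (forall x, -1 <= x <= 1 -> Fc_eig c mu phi x) ->
      exists n, mu = lam n) /\
  (forall n, 0 < chi n) /\
  (forall n, chi n < chi (S n)) /\
  (forall n x, ex_derive_n (psi n) 2 x /\
     (1 - x ^ 2) * Derive_n (psi n) 2 x - 2 * x * Derive_n (psi n) 1 x
       + (chi n - c ^ 2 * x ^ 2) * psi n x = 0).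

Definition enumerates_roots_gt1 (f : R -> R) (x : nat -> R) : Prop :=
  (forall k, 1 < x k /\ f (x k) = 0) /\
  (forall k, x k < x (S k)) /\
  (forall t, 1 < t -> f t = 0 -> exists k, x k = t).

(* On (1, oo) the substitution Phi(x) = sqrt (x^2 - 1) psi(x) turns
   the prolate equation into Phi'' + Q Phi = 0 with
   Q(x) = c^2 + ((c^2 - chi) (x^2 - 1) + 1) / (x^2 - 1)^2,
   and chi < c^2 makes Q exceed c^2 and decrease.  Sturm comparison of Phi with
   sin (c (x - a)) bounds every gap by PI / c; comparison of Phi on one gap with the
   translate of Phi from the previous gap (whose potential Q(x - d) is larger) shows
   the gaps increase.
   The hypotheses only give the derivative of [Derive (psi n)], so differentiability
   of psi n itself is derived from lam n psi n = F_c[psi n], which needs lam n <> 0: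
   a continuous function on [-1, 1] whose Fourier transform vanishes has vanishing
   moments (differentiate in the frequency), is therefore orthogonal to the peaking
   kernels (1 - (t - s)^2 / 4)^N, and so vanishes, contradicting ||psi n|| = 1. *)

From Stdlib Require Import Reals Lra.
From Coquelicot Require Import Coquelicot.
Open Scope R_scope.

Ltac to_R_eq := match goal with |- @eq _ ?a ?b => change (@eq R a b) end.

Lemma continuous_of_ex_derive (f : R -> R) (x : R) : ex_derive f x -> continuous f x.
Proof. exact (ex_derive_continuous f x). Qed.

Lemma ex_RInt_of_continuous (f : R -> R) (a b : R) :
  (forall t, continuous f t) -> ex_RInt f a b.
Proof. intros fc. apply (ex_RInt_continuous (V := R_CompleteNormedModule)); auto. Qed.

Lemma is_derive_RInt_trig_param (h T T' : R -> R) (a b x : R) :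
  (forall t, continuous h t) -> (forall z, is_derive T z (T' z)) ->
  (forall z, continuous T' z) ->
  is_derive (fun y => RInt (fun t => h t * T (y * t)) a b) x
    (RInt (fun t => h t * (t * T' (x * t))) a b).
Proof.
  intros hc dT cT'.
  assert (inner : forall t u,
    is_derive (fun y => h t * T (y * t)) u (h t * (t * T' (u * t)))).
  { intros t u. apply is_derive_scal.
    apply (is_derive_comp T (fun y => y * t) u (T' (u * t)) t); [apply dT|].
    auto_derive; [exact I | ring]. }
  rewrite <- (RInt_ext (fun t => Derive (fun y => h t * T (y * t)) x)).
  2: { intros t _. apply is_derive_unique, inner. }
  apply (is_derive_RInt_param (fun y t => h t * T (y * t))).
  - apply filter_forall. intros u t _. eexists. apply inner.
  - intros t _.
    apply (continuity_2d_pt_ext (fun u v => h v * (v * T' (u * v)))).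
    { intros u v. symmetry. apply is_derive_unique, inner. }
    apply continuity_2d_pt_mult.
    + apply (continuity_1d_2d_pt_comp h (fun u v => v)).
      * apply continuity_pt_filterlim, hc.
      * apply continuity_2d_pt_id2.
    + apply continuity_2d_pt_mult; [apply continuity_2d_pt_id2|].
      apply (continuity_1d_2d_pt_comp T' (fun u v => u * v)).
      * apply continuity_pt_filterlim, cT'.
      * apply continuity_2d_pt_mult; [apply continuity_2d_pt_id1 | apply continuity_2d_pt_id2].
  - apply filter_forall. intros y. apply ex_RInt_of_continuous. intros z.
    apply (continuous_mult h (fun t => T (y * t))); [apply hc|].
    apply (continuous_comp (fun t => y * t) T).
    + apply continuous_of_ex_derive. auto_derive. exact I.
    + apply continuous_of_ex_derive. eexists. apply dT.
Qed.

Lemma is_derive_sin (z : R) : is_derive sin z (cos z).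
Proof. apply is_derive_Reals, derivable_pt_lim_sin. Qed.

Lemma is_derive_cos (z : R) : is_derive cos z (- sin z).
Proof. apply is_derive_Reals, derivable_pt_lim_cos. Qed.

Lemma continuous_sin (z : R) : continuous sin z.
Proof. apply continuous_of_ex_derive. eexists. apply is_derive_sin. Qed.

Lemma continuous_cos (z : R) : continuous cos z.
Proof. apply continuous_of_ex_derive. eexists. apply is_derive_cos. Qed.

Lemma is_derive_const_eq0 (F : R -> R) (x l : R) :
  (forall y, F y = 0) -> is_derive F x l -> l = 0.
Proof.
  intros F0 dF. rewrite <- (is_derive_unique _ _ _ dF), (Derive_ext F (fun _ => 0)) by auto.
  apply Derive_const.
Qed.

Definition trig_transform_vanishes (h : R -> R) : Prop :=
  forall w, RInt (fun t => h t * cos (w * t)) (-1) 1 = 0 /\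
            RInt (fun t => h t * sin (w * t)) (-1) 1 = 0.

Lemma continuous_mul_pow (h : R -> R) (m : nat) (t : R) :
  (forall t, continuous h t) -> continuous (fun t => h t * t ^ m) t.
Proof.
  intros hc. apply (continuous_mult h (fun t => t ^ m)); [apply hc|].
  apply continuous_of_ex_derive. auto_derive. exact I.
Qed.

Lemma trig_transform_vanishes_mul_pow (h : R -> R) (m : nat) :
  (forall t, continuous h t) -> trig_transform_vanishes h ->
  trig_transform_vanishes (fun t => h t * t ^ m).
Proof.
  intros hc H. induction m as [|m IH]; intros w.
  - destruct (H w) as [Hc Hs]. split; [rewrite <- Hc | rewrite <- Hs];
      apply RInt_ext; intros t _; simpl; to_R_eq; ring.
  - assert (hmc : forall t, continuous (fun t => h t * t ^ m) t)
      by (intros; apply continuous_mul_pow, hc).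
    pose proof (is_derive_RInt_trig_param _ _ _ (-1) 1 w hmc is_derive_sin continuous_cos)
      as ds.
    pose proof (is_derive_RInt_trig_param _ _ _ (-1) 1 w hmc is_derive_cos
                  (fun z => continuous_opp _ _ (continuous_sin z))) as dc.
    apply is_derive_const_eq0 in ds; [| intros y; apply (IH y)].
    apply is_derive_const_eq0 in dc; [| intros y; apply (IH y)].
    split.
    + rewrite <- ds. apply RInt_ext. intros t _. cbn [pow]. to_R_eq; ring.
    + transitivity (opp (RInt (fun t => h t * t ^ m * (t * - sin (w * t))) (-1) 1)).
      * rewrite <- RInt_opp.
        -- apply RInt_ext. intros t _. cbn [pow]. unfold opp; simpl. to_R_eq; ring.
        -- apply ex_RInt_of_continuous. intros t.
           apply (continuous_mult (fun t => h t * t ^ m)); [apply hmc|].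
           apply continuous_of_ex_derive. auto_derive. exact I.
      * rewrite dc. unfold opp; simpl. to_R_eq; ring.
Qed.

Lemma is_RInt_peak_kernel_zero (h : R -> R) (s : R) :
  (forall t, continuous h t) ->
  (forall m, RInt (fun t => h t * t ^ m) (-1) 1 = 0) ->
  forall N m, is_RInt (fun t => h t * t ^ m * (1 - (t - s) ^ 2 / 4) ^ N) (-1) 1 0.
Proof.
  intros hc Hm N. induction N as [|N IH]; intros m.
  - rewrite <- (Hm m).
    apply (is_RInt_ext (fun t => h t * t ^ m)); [intros; simpl; to_R_eq; ring|].
    apply (RInt_correct (V := R_CompleteNormedModule)), ex_RInt_of_continuous.
    intros; apply continuous_mul_pow, hc.
  - (* 1 - (t - s)^2/4 = (1 - s^2/4) + (s/2) t - t^2/4 *)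
    pose proof (is_RInt_plus _ _ _ _ _ _
      (is_RInt_plus _ _ _ _ _ _ (is_RInt_scal _ _ _ (1 - s ^ 2 / 4) _ (IH m))
                                (is_RInt_scal _ _ _ (s / 2) _ (IH (S m))))
      (is_RInt_scal _ _ _ (- 1 / 4) _ (IH (S (S m))))) as K.
    unfold plus, scal in K; simpl in K; unfold mult in K; simpl in K.
    rewrite !Rmult_0_r, !Rplus_0_r in K.
    eapply is_RInt_ext; [|exact K]. intros t _. simpl. to_R_eq. field.
Qed.

Lemma RInt_ge_const (F : R -> R) (a b K : R) :
  (forall t, continuous F t) -> a <= b ->
  (forall t, a < t < b -> K <= F t) -> K * (b - a) <= RInt F a b.
Proof.
  intros Fc Hab HK.
  replace (K * (b - a)) with (RInt (fun _ => K) a b).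
  - apply RInt_le; auto using ex_RInt_const, ex_RInt_of_continuous.
  - rewrite RInt_const. unfold scal; simpl; unfold mult; simpl. to_R_eq; ring.
Qed.

Lemma RInt_ge_two_level (F : R -> R) (a c d b A B : R) :
  (forall t, continuous F t) -> a <= c -> c <= d -> d <= b ->
  (forall t, a < t < b -> B <= F t) -> (forall t, c < t < d -> A <= F t) ->
  B * (c - a) + A * (d - c) + B * (b - d) <= RInt F a b.
Proof.
  intros Fc Hac Hcd Hdb HB HA.
  rewrite <- (RInt_Chasles F a c b), <- (RInt_Chasles F c d b);
    try apply ex_RInt_of_continuous; auto.
  unfold plus; simpl.
  pose proof (RInt_ge_const F a c B Fc Hac ltac:(intros; apply HB; lra)).
  pose proof (RInt_ge_const F c d A Fc Hcd HA).
  pose proof (RInt_ge_const F d b B Fc Hdb ltac:(intros; apply HB; lra)).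
  lra.
Qed.

Lemma continuous_gt_near (h : R -> R) (s K : R) :
  continuous h s -> K < h s -> exists e, 0 < e /\ forall t, Rabs (t - s) < e -> K < h t.
Proof.
  intros hc HK.
  destruct (hc (fun y => Rabs (y - h s) < h s - K)) as [e He].
  { exists (mkposreal _ (proj2 (Rlt_0_minus _ _) HK)). auto. }
  exists e. split; [apply cond_pos|]. intros t Ht.
  assert (D : Rabs (h t - h s) < h s - K) by (apply He, Ht).
  apply Rabs_def2 in D. lra.
Qed.

Lemma continuous_lower_bound (h : R -> R) (a b : R) :
  (forall t, continuous h t) -> exists M, 0 < M /\ forall t, a <= t <= b -> - M <= h t.
Proof.
  intros hc. destruct (Rle_or_lt a b) as [Hab|Hba].
  - destruct (continuity_ab_min h a b Hab) as [tm [Hm _]].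
    { intros t _. apply continuity_pt_filterlim, hc. }
    exists (Rabs (h tm) + 1). split; [pose proof (Rabs_pos (h tm)); lra|].
    intros t Ht. specialize (Hm t Ht). pose proof (Rle_abs (- h tm)).
    rewrite Rabs_Ropp in *. lra.
  - exists 1. split; [lra|]. intros t Ht. lra.
Qed.

Lemma pow_lt_mult_pow (p q K : R) : 0 < p < q -> 0 < K -> exists N, p ^ N < K * q ^ N.
Proof.
  intros Hpq HK.
  destruct (pow_lt_1_zero (p / q)) with (y := K) as [N HN]; auto.
  { rewrite Rabs_right.
    - apply (Rmult_lt_reg_r q); [lra|]. unfold Rdiv. rewrite Rmult_assoc, Rinv_l; lra.
    - apply Rle_ge, Rlt_le, Rdiv_lt_0_compat; lra. }
  exists N. specialize (HN N (le_n N)).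
  assert (0 < q ^ N) by (apply pow_lt; lra).
  rewrite Rabs_right in HN by (apply Rle_ge, pow_le, Rlt_le, Rdiv_lt_0_compat; lra).
  unfold Rdiv in HN. rewrite Rpow_mult_distr, pow_inv in HN.
  apply (Rmult_lt_compat_r (q ^ N)) in HN; auto.
  rewrite Rmult_assoc, Rinv_l in HN by lra. lra.
Qed.

(* The kernel is at least [1 - eta^2/16] where [|t - s| <= eta/2], at most
   [1 - eta^2/4] where [|t - s| >= eta], and [h > 0] in between. *)
Lemma RInt_peak_kernel_pos (h : R -> R) (s eta delta M : R) (N : nat) :
  (forall t, continuous h t) -> 0 < eta -> -1 <= s - eta / 2 -> s + eta / 2 <= 1 ->
  0 < M -> (forall t, -1 <= t <= 1 -> - M <= h t) ->
  0 < delta -> (forall t, Rabs (t - s) <= eta -> delta <= h t) ->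
  2 * M * (1 - eta ^ 2 / 4) ^ N < delta * eta * (1 - eta ^ 2 / 16) ^ N ->
  0 < RInt (fun t => h t * (1 - (t - s) ^ 2 / 4) ^ N) (-1) 1.
Proof.
  intros hc Heta Hl Hr HM HMb Hdelta Hnear HN.
  remember (1 - eta ^ 2 / 16) as qa eqn:Eqa. remember (1 - eta ^ 2 / 4) as qb eqn:Eqb.
  assert (0 <= qb ^ N) by (apply pow_le; nra).
  assert (0 <= qa ^ N) by (apply pow_le; nra).
  eapply Rlt_le_trans;
    [| apply (RInt_ge_two_level _ (-1) (s - eta / 2) (s + eta / 2) 1
                                (delta * qa ^ N) (- M * qb ^ N))].
  - match goal with |- 0 < ?lower =>
      replace lower with (delta * eta * qa ^ N - 2 * M * qb ^ N + M * qb ^ N * eta) by field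
    end.
    assert (0 <= M * qb ^ N * eta) by (apply Rmult_le_pos; nra). lra.
  - intros t. apply (continuous_mult h); [apply hc|].
    apply continuous_of_ex_derive. auto_derive. exact I.
  - lra.
  - lra.
  - lra.
  - intros t Ht. assert (0 <= (1 - (t - s) ^ 2 / 4) ^ N) by (apply pow_le; nra).
    destruct (Rle_or_lt (Rabs (t - s)) eta) as [Hts|Hts].
    + pose proof (Hnear t Hts). nra.
    + assert (eta ^ 2 <= (t - s) ^ 2) by (rewrite <- (pow2_abs (t - s)); apply pow_incr; lra).
      assert ((1 - (t - s) ^ 2 / 4) ^ N <= qb ^ N) by (apply pow_incr; split; nra).
      pose proof (HMb t ltac:(lra)). nra.
  - intros t Ht. pose proof (Hnear t ltac:(apply Rabs_le; lra)).
    assert (qa ^ N <= (1 - (t - s) ^ 2 / 4) ^ N).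
    { apply pow_incr. split; [nra|].
      assert (0 < (eta / 2 - (t - s)) * (eta / 2 + (t - s))) by (apply Rmult_lt_0_compat; lra).
      nra. }
    apply Rmult_le_compat; [lra | assumption | assumption | assumption].
Qed.

Lemma nonpos_of_peak_kernel_orthogonal (h : R -> R) (s : R) :
  (forall t, continuous h t) -> -1 < s < 1 ->
  (forall N, RInt (fun t => h t * (1 - (t - s) ^ 2 / 4) ^ N) (-1) 1 = 0) -> h s <= 0.
Proof.
  intros hc Hs Hker.
  destruct (Rle_or_lt (h s) 0) as [|Hpos]; [assumption|exfalso].
  destruct (continuous_gt_near h s (h s / 2) (hc s) ltac:(lra)) as [e [He Hnear]].
  destruct (continuous_lower_bound h (-1) 1 hc) as [M [HM HMb]].
  set (eta := Rmin (e / 2) (Rmin (1 - s) (1 + s))).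
  assert (Heta : 0 < eta /\ eta < e /\ eta <= 1 - s /\ eta <= 1 + s).
  { unfold eta. repeat split.
    - repeat apply Rmin_glb_lt; lra.
    - apply (Rle_lt_trans _ (e / 2)); [apply Rmin_l | lra].
    - eapply Rle_trans; [apply Rmin_r | apply Rmin_l].
    - eapply Rle_trans; [apply Rmin_r | apply Rmin_r]. }
  destruct Heta as (Heta0 & Hetae & Hetas1 & Hetas2).
  destruct (pow_lt_mult_pow (1 - eta ^ 2 / 4) (1 - eta ^ 2 / 16) (h s / 2 * eta / (2 * M)))
    as [N HN]; [split; nra | apply Rdiv_lt_0_compat; nra |].
  apply (Rlt_irrefl 0). rewrite <- (Hker N) at 2.
  apply (RInt_peak_kernel_pos h s eta (h s / 2) M N); auto; try lra.
  - intros t Ht. apply Rlt_le, Hnear. lra.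
  - apply (Rmult_lt_compat_l (2 * M)) in HN; [|lra].
    replace (2 * M * (h s / 2 * eta / (2 * M) * (1 - eta ^ 2 / 16) ^ N))
      with (h s / 2 * eta * (1 - eta ^ 2 / 16) ^ N) in HN by (field; lra).
    exact HN.
Qed.

Lemma nonpos_of_moments_zero (h : R -> R) (s : R) :
  (forall t, continuous h t) -> -1 < s < 1 ->
  (forall m, RInt (fun t => h t * t ^ m) (-1) 1 = 0) -> h s <= 0.
Proof.
  intros hc Hs Hm. apply nonpos_of_peak_kernel_orthogonal; auto. intros N.
  apply is_RInt_unique.
  apply (is_RInt_ext (fun t => h t * t ^ 0 * (1 - (t - s) ^ 2 / 4) ^ N));
    [intros; simpl; to_R_eq; ring | apply is_RInt_peak_kernel_zero; auto].
Qed.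

Lemma trig_transform_vanishes_eq0 (h : R -> R) (s : R) :
  (forall t, continuous h t) -> trig_transform_vanishes h -> -1 < s < 1 -> h s = 0.
Proof.
  intros hc H Hs.
  assert (Hm : forall m, RInt (fun t => h t * t ^ m) (-1) 1 = 0).
  { intros m. rewrite <- (proj1 (trig_transform_vanishes_mul_pow h m hc H 0)).
    apply RInt_ext. intros t _. rewrite Rmult_0_l, cos_0. to_R_eq; ring. }
  apply Rle_antisym; [apply nonpos_of_moments_zero; auto|].
  enough (- h s <= 0) by lra.
  apply (nonpos_of_moments_zero (fun t => - h t)); [intros; apply (continuous_opp h), hc | auto |].
  intros m. rewrite <- Ropp_0, <- (Hm m), <- (RInt_opp (V := R_CompleteNormedModule)).
  - apply RInt_ext. intros t _. unfold opp; simpl. to_R_eq; ring.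
  - apply ex_RInt_of_continuous. intros; apply continuous_mul_pow, hc.
Qed.

Definition sturm_sol (q u u1 : R -> R) (y : R) : Prop :=
  is_derive u y (u1 y) /\ is_derive u1 y (- q y * u y).

Lemma is_derive_wronskian (A B u u1 v v1 : R -> R) (y : R) :
  sturm_sol A u u1 y -> sturm_sol B v v1 y ->
  is_derive (fun z => u1 z * v z - u z * v1 z) y ((B y - A y) * u y * v y).
Proof.
  intros [du du1] [dv dv1].
  eapply is_derive_ext; [intros z; reflexivity|].
  replace ((B y - A y) * u y * v y)
    with (- A y * u y * v y + u1 y * v1 y - (u1 y * v1 y + u y * (- B y * v y))) by ring.
  apply (is_derive_minus (fun z => u1 z * v z) (fun z => u z * v1 z));
    apply (is_derive_mult _ _ y); auto; intros; apply Rmult_comm.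
Qed.

Lemma MVT_is_derive (F dF : R -> R) (a b : R) : a < b ->
  (forall y, a <= y <= b -> is_derive F y (dF y)) ->
  exists xi, F b - F a = dF xi * (b - a) /\ a < xi < b.
Proof. intros Hab dF'. apply MVT_cor2; auto. intros y Hy. apply is_derive_Reals, dF'; auto. Qed.

(* The Wronskian [u' v - u v'] vanishes at [a] and increases, so [u / v]
   increases on [((a + b) / 2, b)], which is absurd since [u b = 0]. *)
Lemma sturm_comparison (A B u u1 v v1 : R -> R) (a b : R) : a < b ->
  (forall y, a <= y <= b -> sturm_sol A u u1 y) ->
  (forall y, a <= y <= b -> sturm_sol B v v1 y) ->
  (forall y, a < y < b -> A y < B y) ->
  u a = 0 -> u b = 0 -> (forall y, a < y < b -> 0 < u y) ->
  v a = 0 -> ~ (forall y, a < y <= b -> 0 < v y).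
Proof.
  intros Hab Hu Hv HAB ua ub upos va vpos.
  set (W z := u1 z * v z - u z * v1 z).
  assert (Wpos : forall y, a < y <= b -> 0 < W y).
  { intros y Hy.
    destruct (MVT_is_derive W (fun z => (B z - A z) * u z * v z) a y) as [xi [E Hxi]];
      [lra | intros z Hz; apply is_derive_wronskian; [apply Hu | apply Hv]; lra|].
    assert (0 < (B xi - A xi) * u xi * v xi).
    { repeat apply Rmult_lt_0_compat; [pose proof (HAB xi) | apply upos | apply vpos]; lra. }
    unfold W at 2 in E. rewrite ua, va in E. nra. }
  set (t := (a + b) / 2).
  destruct (MVT_is_derive (fun z => u z / v z) (fun z => W z / v z ^ 2) t b) as [xi [E Hxi]].
  { unfold t; lra. }
  { intros y Hy. destruct (Hu y) as [du _], (Hv y) as [dv _]; try (unfold t in Hy; lra).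
    apply is_derive_div; auto. apply Rgt_not_eq, vpos. unfold t in Hy; lra. }
  assert (0 < u t / v t) by (apply Rdiv_lt_0_compat; [apply upos | apply vpos]; unfold t; lra).
  assert (0 < W xi / v xi ^ 2 * (b - t)).
  { apply Rmult_lt_0_compat; [apply Rdiv_lt_0_compat|]; unfold t in *.
    - apply Wpos; lra.
    - apply pow_lt, vpos; lra.
    - lra. }
  rewrite ub in E. unfold Rdiv at 1 in E. lra.
Qed.

Lemma sturm_sol_sin (c a y : R) :
  sturm_sol (fun _ => c ^ 2) (fun z => sin (c * (z - a))) (fun z => c * cos (c * (z - a))) y.
Proof. split; auto_derive; auto; unfold Rminus; to_R_eq; ring. Qed.

Lemma sturm_sol_shift (q u u1 : R -> R) (d y : R) : sturm_sol q u u1 (y - d) ->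
  sturm_sol (fun z => q (z - d)) (fun z => u (z - d)) (fun z => u1 (z - d)) y.
Proof.
  assert (shift : forall (F : R -> R) l,
             is_derive F (y - d) l -> is_derive (fun z => F (z - d)) y l).
  { intros F l dF. eapply is_derive_ext; [intros; reflexivity|].
    replace l with (scal 1 l) by (unfold scal; simpl; unfold mult; simpl; to_R_eq; ring).
    apply (is_derive_comp F (fun z => z - d)); [exact dF|].
    auto_derive; [exact I | to_R_eq; ring]. }
  intros [du du1]. split; apply shift; auto.
Qed.

Definition solves_prolate_gt1 (c chi : R) (f f1 f2 : R -> R) : Prop :=
  forall x, 1 < x -> is_derive f x (f1 x) /\ is_derive f1 x (f2 x) /\
    (1 - x ^ 2) * f2 x - 2 * x * f1 x + (chi - c ^ 2 * x ^ 2) * f x = 0.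

Definition liouville (f : R -> R) (x : R) : R := sqrt (x ^ 2 - 1) * f x.

Definition liouville_deriv (f f1 : R -> R) (x : R) : R :=
  sqrt (x ^ 2 - 1) * f1 x + x * f x / sqrt (x ^ 2 - 1).

Definition prolate_potential (c chi x : R) : R :=
  c ^ 2 + ((c ^ 2 - chi) * (x ^ 2 - 1) + 1) / (x ^ 2 - 1) ^ 2.

Lemma solves_prolate_gt1_opp (c chi : R) (f f1 f2 : R -> R) :
  solves_prolate_gt1 c chi f f1 f2 ->
  solves_prolate_gt1 c chi (fun x => - f x) (fun x => - f1 x) (fun x => - f2 x).
Proof.
  intros H x Hx. destruct (H x Hx) as (d1 & d2 & E).
  split; [|split]; [apply (is_derive_opp f) | apply (is_derive_opp f1) | lra]; auto.
Qed.

Lemma sturm_sol_liouville (c chi : R) (f f1 f2 : R -> R) (x : R) :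
  solves_prolate_gt1 c chi f f1 f2 -> 1 < x ->
  sturm_sol (prolate_potential c chi) (liouville f) (liouville_deriv f f1) x.
Proof.
  intros H Hx. destruct (H x Hx) as (d1 & d2 & E).
  set (r := sqrt (x ^ 2 - 1)).
  assert (Hr : 0 < r) by (apply sqrt_lt_R0; nra).
  assert (Hrr : r * r = x ^ 2 - 1) by (apply sqrt_sqrt; nra).
  assert (dr : is_derive (fun y => sqrt (y ^ 2 - 1)) x (x / r)).
  { eapply is_derive_ext; [intros; reflexivity|].
    replace (x / r) with (2 * x / (2 * sqrt (x ^ 2 - 1))) by (fold r; field; lra).
    apply (is_derive_sqrt (fun y => y ^ 2 - 1)); [|nra].
    auto_derive; [exact I | to_R_eq; ring]. }
  split.
  - unfold liouville, liouville_deriv. fold r.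
    replace (r * f1 x + x * f x / r) with (x / r * f x + r * f1 x) by (field; lra).
    apply (is_derive_mult (fun y => sqrt (y ^ 2 - 1)) f x); auto. intros; apply Rmult_comm.
  - unfold liouville_deriv, liouville, prolate_potential. fold r.
    assert (F2 : f2 x = (2 * x * f1 x - (chi - c ^ 2 * x ^ 2) * f x) / (1 - x ^ 2))
      by (field_simplify_eq; nra).
    replace (- (c ^ 2 + ((c ^ 2 - chi) * (x ^ 2 - 1) + 1) / (x ^ 2 - 1) ^ 2) * (r * f x))
      with ((x / r * f1 x + r * f2 x)
            + ((1 * f x + x * f1 x) * r - x * f x * (x / r)) / r ^ 2).
    + apply (is_derive_plus (fun y => sqrt (y ^ 2 - 1) * f1 y)
                            (fun y => y * f y / sqrt (y ^ 2 - 1))).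
      * apply (is_derive_mult (fun y => sqrt (y ^ 2 - 1)) f1 x); auto. intros; apply Rmult_comm.
      * apply (is_derive_div (fun y => y * f y) (fun y => sqrt (y ^ 2 - 1)));
          [|exact dr | fold r; lra].
        apply (is_derive_mult (fun y => y) f x); [auto_derive; auto | auto |].
        intros; apply Rmult_comm.
    + rewrite F2. replace (1 - x ^ 2) with (- (r * r)) by lra.
      replace (x ^ 2 - 1) with (r * r) by lra.
      assert (X2 : x ^ 2 = r * r + 1) by lra.
      field_simplify_eq; [| lra]. rewrite X2. ring.
Qed.

Lemma prolate_potential_gt (c chi x : R) :
  chi < c ^ 2 -> 1 < x -> c ^ 2 < prolate_potential c chi x.
Proof.
  intros Hchi Hx. unfold prolate_potential.
  enough (0 < ((c ^ 2 - chi) * (x ^ 2 - 1) + 1) / (x ^ 2 - 1) ^ 2) by lra.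
  assert (0 < x ^ 2 - 1) by nra.
  assert (0 < (c ^ 2 - chi) * (x ^ 2 - 1)) by (apply Rmult_lt_0_compat; lra).
  apply Rdiv_lt_0_compat; [lra | apply pow_lt; lra].
Qed.

Lemma prolate_potential_decreasing (c chi u v : R) : chi < c ^ 2 -> 1 < u -> u < v ->
  prolate_potential c chi v < prolate_potential c chi u.
Proof.
  intros Hchi Hu Huv. unfold prolate_potential.
  set (p := u ^ 2 - 1). set (q := v ^ 2 - 1).
  assert (0 < p) by (unfold p; nra). assert (p < q) by (unfold p, q; nra).
  replace (((c ^ 2 - chi) * q + 1) / q ^ 2) with ((c ^ 2 - chi) * / q + / q * / q) by (field; lra).
  replace (((c ^ 2 - chi) * p + 1) / p ^ 2) with ((c ^ 2 - chi) * / p + / p * / p) by (field; lra).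
  assert (/ q < / p) by (apply Rinv_lt_contravar; nra).
  assert (0 < / q) by (apply Rinv_0_lt_compat; lra).
  nra.
Qed.

Lemma liouville_pos (f : R -> R) (x : R) : 1 < x -> 0 < f x -> 0 < liouville f x.
Proof. intros Hx Hf. apply Rmult_lt_0_compat; [apply sqrt_lt_R0; nra | exact Hf]. Qed.

Lemma prolate_root_gap_le (c chi : R) (f f1 f2 : R -> R) (a b : R) :
  0 < c -> chi < c ^ 2 -> solves_prolate_gt1 c chi f f1 f2 ->
  1 < a -> a < b -> f a = 0 -> (forall t, a < t < b -> 0 < f t) -> b - a <= PI / c.
Proof.
  intros Hc Hchi Hf Ha Hab fa fpos.
  destruct (Rle_or_lt (b - a) (PI / c)) as [|Hgap]; [assumption|exfalso].
  assert (HPIc : 0 < PI / c) by (apply Rdiv_lt_0_compat; [apply PI_RGT_0 | lra]).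
  set (e := a + PI / c).
  assert (Hce : c * (e - a) = PI) by (unfold e; field; lra).
  apply (sturm_comparison (fun _ => c ^ 2) (prolate_potential c chi)
           (fun y => sin (c * (y - a))) (fun y => c * cos (c * (y - a)))
           (liouville f) (liouville_deriv f f1) a e).
  - unfold e; lra.
  - intros; apply sturm_sol_sin.
  - intros y Hy. apply (sturm_sol_liouville c chi f f1 f2); auto; lra.
  - intros y Hy. apply prolate_potential_gt; lra.
  - rewrite Rminus_diag, Rmult_0_r. apply sin_0.
  - rewrite Hce. apply sin_PI.
  - intros y Hy. apply sin_gt_0; [nra|].
    rewrite <- Hce. apply Rmult_lt_compat_l; lra.
  - unfold liouville. rewrite fa. ring.
  - intros y Hy. apply liouville_pos; [lra | apply fpos; unfold e in Hy; lra].
Qed.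

Lemma prolate_root_gap_mono (c chi : R) (f f1 f2 g g1 g2 : R -> R) (x0 a b : R) :
  chi < c ^ 2 -> solves_prolate_gt1 c chi f f1 f2 -> solves_prolate_gt1 c chi g g1 g2 ->
  1 < x0 -> x0 < a -> a < b -> f x0 = 0 -> (forall t, x0 < t < a -> 0 < f t) ->
  g a = 0 -> g b = 0 -> (forall t, a < t < b -> 0 < g t) -> a - x0 <= b - a.
Proof.
  intros Hchi Hf Hg Hx0 Hx0a Hab fx0 fpos ga gb gpos.
  destruct (Rle_or_lt (a - x0) (b - a)) as [|Hgap]; [assumption|exfalso].
  set (d := a - x0).
  apply (sturm_comparison (prolate_potential c chi) (fun y => prolate_potential c chi (y - d))
           (liouville g) (liouville_deriv g g1)
           (fun y => liouville f (y - d)) (fun y => liouville_deriv f f1 (y - d)) a b); auto.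
  - intros y Hy. apply (sturm_sol_liouville c chi g g1 g2); auto; lra.
  - intros y Hy. apply sturm_sol_shift, (sturm_sol_liouville c chi f f1 f2); auto.
    unfold d; lra.
  - intros y Hy. apply prolate_potential_decreasing; unfold d; lra.
  - unfold liouville. rewrite ga. ring.
  - unfold liouville. rewrite gb. ring.
  - intros y Hy. apply liouville_pos; [lra | auto].
  - unfold liouville, d. replace (a - (a - x0)) with x0 by ring. rewrite fx0. ring.
  - intros y Hy. apply liouville_pos; unfold d; [lra | apply fpos; lra].
Qed.

Lemma continuous_nonvanishing_sign (f : R -> R) (a b : R) :
  (forall t, continuous f t) -> a < b -> (forall t, a < t < b -> f t <> 0) ->
  (forall t, a < t < b -> 0 < f t) \/ (forall t, a < t < b -> f t < 0).
Proof.
  intros fc Hab Hnz.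
  assert (Hf : continuity f) by (intros t; apply continuity_pt_filterlim, fc).
  set (m := (a + b) / 2).
  assert (Hm : a < m < b) by (unfold m; lra).
  assert (Hsame : forall t, a < t < b -> 0 < f t * f m).
  { intros t Ht. destruct (Rlt_or_le 0 (f t * f m)) as [|Hle]; [assumption|exfalso].
    destruct (Rle_or_lt t m) as [Htm|Hmt].
    - destruct (IVT_cor f t m Hf Htm Hle) as [z [Hz fz]]. apply (Hnz z); lra.
    - rewrite Rmult_comm in Hle.
      destruct (IVT_cor f m t Hf (Rlt_le _ _ Hmt) Hle) as [z [Hz fz]]. apply (Hnz z); lra. }
  destruct (Rlt_or_le 0 (f m)) as [Hpos|Hneg].
  - left. intros t Ht. specialize (Hsame t Ht). nra.
  - right. intros t Ht. specialize (Hsame t Ht).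
    assert (f m < 0) by (pose proof (Hnz m Hm); lra). nra.
Qed.

Lemma enumerates_roots_gt1_le (f : R -> R) (X : nat -> R) (i j : nat) :
  enumerates_roots_gt1 f X -> (i <= j)%nat -> X i <= X j.
Proof.
  intros [_ [Hinc _]] Hij. induction Hij as [|j _ IH]; [lra|].
  specialize (Hinc j). lra.
Qed.

Lemma enumerates_roots_gt1_gap (f : R -> R) (X : nat -> R) (i : nat) (t : R) :
  enumerates_roots_gt1 f X -> X i < t < X (S i) -> f t <> 0.
Proof.
  intros HX Ht ft. pose proof HX as [Hr [_ Hall]].
  destruct (Hall t) as [j Hj]; [pose proof (proj1 (Hr i)); lra | exact ft |].
  rewrite <- Hj in Ht.
  destruct (Nat.le_gt_cases j i) as [Hji|Hij].
  - pose proof (enumerates_roots_gt1_le f X j i HX Hji). lra.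
  - pose proof (enumerates_roots_gt1_le f X (S i) j HX Hij). lra.
Qed.

Lemma prolate_sol_pos_on_root_gap (c chi : R) (f f1 f2 : R -> R) (X : nat -> R) (i : nat) :
  solves_prolate_gt1 c chi f f1 f2 -> (forall t, continuous f t) -> enumerates_roots_gt1 f X ->
  exists g g1 g2, solves_prolate_gt1 c chi g g1 g2 /\ g (X i) = 0 /\ g (X (S i)) = 0 /\
    (forall t, X i < t < X (S i) -> 0 < g t).
Proof.
  intros Hf fc HX.
  pose proof (enumerates_roots_gt1_gap f X i) as Hgap.
  pose proof HX as [Hr [Hinc _]].
  destruct (continuous_nonvanishing_sign f (X i) (X (S i)) fc (Hinc i) (fun t => Hgap t HX))
    as [Hpos|Hneg].
  - exists f, f1, f2. split; [exact Hf | split; [apply Hr | split; [apply Hr | exact Hpos]]].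
  - exists (fun x => - f x), (fun x => - f1 x), (fun x => - f2 x).
    split; [apply solves_prolate_gt1_opp; auto|].
    rewrite (proj2 (Hr i)), (proj2 (Hr (S i))).
    split; [ring | split; [ring |]]. intros t Ht. specialize (Hneg t Ht). lra.
Qed.

Lemma PSWF_eigenvalue_neq0 (c : R) (psi : nat -> R -> R) (lam : nat -> C) (chi : nat -> R)
    (n : nat) :
  0 < c -> is_PSWF_family c psi lam chi -> lam n <> 0.
Proof.
  intros Hc (psic & Heig & Hnorm & _) Hlam.
  assert (Hvan : trig_transform_vanishes (psi n)).
  { intros w. destruct (Heig n (w / c)) as [Ec Es].
    rewrite Hlam in Ec, Es. simpl in Ec, Es. rewrite Rmult_0_l in Ec, Es.
    replace (c * (w / c)) with w in Ec, Es by (field; lra). auto. }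
  specialize (Hnorm n).
  rewrite (RInt_ext _ (fun _ => 0)), RInt_const in Hnorm.
  - unfold scal in Hnorm; simpl in Hnorm; unfold mult in Hnorm; simpl in Hnorm. lra.
  - intros t Ht. rewrite Rmin_left, Rmax_right in Ht by lra.
    rewrite (trig_transform_vanishes_eq0 (psi n) t (psic n) Hvan Ht). to_R_eq; ring.
Qed.

Lemma PSWF_ex_derive (c : R) (psi : nat -> R -> R) (lam : nat -> C) (chi : nat -> R)
    (n : nat) (x : R) :
  0 < c -> is_PSWF_family c psi lam chi -> ex_derive (psi n) x.
Proof.
  intros Hc Hf. pose proof (PSWF_eigenvalue_neq0 c psi lam chi n Hc Hf) as Hlam.
  destruct Hf as (psic & Heig & _).
  set (G T y := RInt (fun t => psi n t * T (y * t)) (-1) 1).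
  assert (dG : forall T T', (forall z, is_derive T z (T' z)) -> (forall z, continuous T' z) ->
             ex_derive (fun y => G T (c * y)) x).
  { intros T T' dT cT'. apply (ex_derive_comp (G T) (fun y => c * y)).
    - eexists. apply is_derive_RInt_trig_param; auto.
    - auto_derive. exact I. }
  destruct (Req_dec (Re (lam n)) 0) as [HR|HR].
  - assert (HI : Im (lam n) <> 0).
    { intros HI. apply Hlam. destruct (lam n) as [re im]. simpl in HR, HI. now subst. }
    apply (ex_derive_ext (fun y => / Im (lam n) * G sin (c * y))).
    + intros y. destruct (Heig n y) as [_ Es]. unfold G. rewrite <- Es. to_R_eq; field. auto.
    + apply ex_derive_scal, (dG sin cos is_derive_sin).
      exact continuous_cos.
  - apply (ex_derive_ext (fun y => / Re (lam n) * G cos (c * y))).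
    + intros y. destruct (Heig n y) as [Ec _]. unfold G. rewrite <- Ec. to_R_eq; field. auto.
    + apply ex_derive_scal, (dG cos (fun z => - sin z) is_derive_cos).
      intros z. apply (continuous_opp sin), continuous_sin.
Qed.

Lemma PSWF_solves_prolate (c : R) (psi : nat -> R -> R) (lam : nat -> C) (chi : nat -> R)
    (n : nat) :
  0 < c -> is_PSWF_family c psi lam chi ->
  solves_prolate_gt1 c (chi n) (psi n) (Derive (psi n)) (Derive (Derive (psi n))).
Proof.
  (* [Derive_n (psi n) 2] is [Derive (Derive (psi n))] by conversion. *)
  intros Hc Hf x _. pose proof (PSWF_ex_derive c psi lam chi n x Hc Hf) as Hd.
  destruct Hf as (_ & _ & _ & _ & _ & _ & _ & _ & Hode).
  destruct (Hode n x) as [H2 E].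
  split; [|split]; [apply Derive_correct; auto | apply Derive_correct, H2 | exact E].
Qed.

Theorem theorem33 (c : R) (psi : nat -> R -> R) (lam : nat -> C)
    (chi : nat -> R) (n : nat) (x : nat -> R) :
  0 < c -> is_PSWF_family c psi lam chi -> chi n < c ^ 2 ->
  enumerates_roots_gt1 (psi n) x ->
  forall k : nat,
    x (S k) - x k <= x (S (S k)) - x (S k) /\ x (S k) - x k <= PI / c.
Proof.
  intros Hc Hf Hchi Hroots k.
  pose proof (PSWF_solves_prolate c psi lam chi n Hc Hf) as Hsol.
  assert (Hcont : forall t, continuous (psi n) t) by apply Hf.
  destruct (prolate_sol_pos_on_root_gap _ _ _ _ _ x k Hsol Hcont Hroots)
    as (g & g1 & g2 & Hg & gk & gk1 & gpos).
  destruct (prolate_sol_pos_on_root_gap _ _ _ _ _ x (S k) Hsol Hcont Hroots)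
    as (h & h1 & h2 & Hh & hk1 & hk2 & hpos).
  destruct Hroots as [Hr [Hinc _]].
  split.
  - apply (prolate_root_gap_mono c (chi n) g g1 g2 h h1 h2); auto; apply Hr.
  - apply (prolate_root_gap_le c (chi n) g g1 g2); auto; apply Hr.
Qed.
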